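(* For all integers $i,j\ge1$ there exist complex numbers $W^{i,j}_k$ ($0\le k\le i+j-1$), depending only on $i,j,k,\beta,\delta$, with $W^{i,i}_k=0$, such that whenever $A,B,C$ in a unital associative algebra over $\mathbb C$ satisfy $[A,B]=C$ and $[A,C]=\sum_{m=1}^{L+1}\alpha_mA^m+\delta B+\epsilon+\beta\{A,B\}$ (for some $L\ge0$ and constants $\alpha_m,\epsilon$), one has $$A^iBA^j-A^jBA^i=\sum_{k=0}^{i+j-1}W^{i,j}_k\{A^k,C\}.$$
   Context: $[X,Y]=XY-YX$, $\{X,Y\}=XY+YX$, $A^0=1$. *)

From HB Require Import structures.
From mathcomp Require Import all_boot all_order all_algebra.
Set Implicit Arguments. Unset Strict Implicit. Unset Printing Implicit Defensive.
Import Order.TTheory GRing.Theory Num.Theory.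
Local Open Scope ring_scope.

Definition comm (V : pzRingType) (X Y : V) : V := X * Y - Y * X.
Definition acomm (V : pzRingType) (X Y : V) : V := X * Y + Y * X.

From HB Require Import structures.
From mathcomp Require Import all_boot all_order all_algebra zify.
Import Order.TTheory GRing.Theory Num.Theory.
Local Open Scope ring_scope.
Set Implicit Arguments. Unset Strict Implicit.

(* Two identities, valid whenever [A,B] = C and [A,C] = Q + δB + β{A,B} with
   Q commuting with A, drive an induction on the total degree N = a + b:
   - expanding [A^(n+1), B] = Σ_t A^t C A^(n-t) gives
       2 skew (b+n+1) b = Σ_t symm (b+t) (b+n-t),
     so skew in degree N+1 is a combination of symm in degree N;
   - moving one A across C gives
       symm (p+1) (q+1) = symm (p+2) q - δ skew (p+1) q - β (skew (p+2) q + skew (p+1) (q+1)),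
     so symm in degree N reduces, by induction on q, to symm N 0 = {A^N, C}
     plus skew terms of degree <= N.
   "Universal coefficients" is captured by the predicate [rep N X]: the family
   of expressions X is, in every such algebra, a combination of the {A^k, C},
   k < N, with coefficients independent of the algebra.  This works over any
   field in which 2 is invertible; the relations of the theorem are the
   instance Q = Σ α_m A^m + ε. *)

Definition skew (V : pzRingType) (A X : V) (a b : nat) : V :=
  A ^+ a * X * A ^+ b - A ^+ b * X * A ^+ a.
Definition symm (V : pzRingType) (A X : V) (a b : nat) : V :=
  A ^+ a * X * A ^+ b + A ^+ b * X * A ^+ a.

Section SandwichIdentities.
Variables (V : pzRingType) (A : V).

Lemma skew_id X a : skew A X a a = 0.
Proof. by rewrite /skew subrr. Qed.

Lemma skewN X a b : skew A X b a = - skew A X a b.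
Proof. by rewrite /skew opprB. Qed.

Lemma symmC X p q : symm A X p q = symm A X q p.
Proof. by rewrite /symm addrC. Qed.

Lemma symm_0 X n : symm A X n 0 = acomm (A ^+ n) X.
Proof. by rewrite /symm /acomm expr0 mulr1 mul1r. Qed.

Lemma comm_exprS B n :
  A ^+ n.+1 * B - B * A ^+ n.+1 =
  \sum_(0 <= t < n.+1) A ^+ t * comm A B * A ^+ (n - t).
Proof.
elim: n => [|n IH]; first by rewrite big_nat1 !expr1 expr0 mul1r mulr1.
rewrite big_nat_recl // expr0 mul1r subn0.
have -> : \sum_(0 <= t < n.+1) A ^+ t.+1 * comm A B * A ^+ (n.+1 - t.+1)
          = A * \sum_(0 <= t < n.+1) A ^+ t * comm A B * A ^+ (n - t).
  by rewrite mulr_sumr; apply: eq_bigr => t _; rewrite subSS exprS !mulrA.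
rewrite -IH /comm [A ^+ n.+2]exprS mulrBl mulrBr !mulrA.
by rewrite [RHS]addrC addrA subrK.
Qed.

Lemma skew_sum2 B b n :
  skew A B (b + n.+1) b *+ 2 =
  \sum_(0 <= t < n.+1) symm A (comm A B) (b + t) (b + (n - t)).
Proof.
have skew_sum : skew A B (b + n.+1) b =
    \sum_(0 <= t < n.+1) A ^+ (b + t) * comm A B * A ^+ (b + (n - t)).
  have -> : skew A B (b + n.+1) b = A ^+ b * (A ^+ n.+1 * B - B * A ^+ n.+1) * A ^+ b.
    by rewrite /skew [in X in _ - X]addnC !exprD mulrBr mulrBl !mulrA.
  rewrite comm_exprS mulr_sumr mulr_suml; apply: eq_bigr => t _.
  by rewrite (addnC b (n - t)%N) !exprD !mulrA.
rewrite /symm big_split /= mulr2n {1}skew_sum; congr (_ + _).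
rewrite skew_sum big_nat_rev /=; apply: eq_big_nat => t /andP [_ ht].
by rewrite add0n subSS subKn.
Qed.

Lemma symm_shift C p q :
  symm A C p.+1 q.+1 = symm A C p.+2 q - skew A (comm A C) p.+1 q.
Proof.
have CA : C * A = A * C - comm A C by rewrite /comm opprB addrC subrK.
have AC : A * C = C * A + comm A C by rewrite /comm addrC subrK.
have front : A ^+ p.+1 * C * A ^+ q.+1
            = A ^+ p.+2 * C * A ^+ q - A ^+ p.+1 * comm A C * A ^+ q.
  rewrite [A ^+ q.+1]exprS mulrA -[A ^+ p.+1 * C * A]mulrA CA.
  by rewrite mulrBr mulrBl !mulrA -exprSr.
have back : A ^+ q.+1 * C * A ^+ p.+1
             = A ^+ q * C * A ^+ p.+2 + A ^+ q * comm A C * A ^+ p.+1.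
  rewrite [A ^+ q.+1]exprSr -[A ^+ q * A * C]mulrA AC mulrDr mulrDl !mulrA.
  by rewrite -[A ^+ q * C * A * A ^+ p.+1]mulrA -exprS.
by rewrite /symm /skew front back addrACA opprB [- _ + _]addrC.
Qed.

Lemma skewD X Y a b : skew A (X + Y) a b = skew A X a b + skew A Y a b.
Proof. by rewrite /skew !(mulrDr, mulrDl) opprD addrACA. Qed.

Lemma skew_central Q a b : GRing.comm A Q -> skew A Q a b = 0.
Proof.
move=> cAQ; have cQ n : A ^+ n * Q = Q * A ^+ n.
  by have := commrX n (commr_sym cAQ); rewrite /GRing.comm => ->.
by rewrite /skew !cQ -!mulrA -!exprD addnC subrr.
Qed.

Lemma skew_acomm B a b :
  skew A (acomm A B) a b = skew A B a.+1 b + skew A B a b.+1.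
Proof.
rewrite /skew /acomm !(mulrDr, mulrDl) !mulrA -!exprSr.
rewrite -[A ^+ a * B * A * _]mulrA -[A ^+ b * B * A * _]mulrA -!exprS.
by rewrite opprD [- _ - _]addrC addrACA.
Qed.

End SandwichIdentities.

Lemma skewZ (F : fieldType) (V : algType F) (A X : V) (k : F) a b :
  skew A (k *: X) a b = k *: skew A X a b.
Proof. by rewrite /skew -!scalerAr -!scalerAl scalerBr. Qed.

Section UniversalCoefficients.
Variables (F : fieldType) (beta delta : F).
Hypothesis two_neq0 : (2%:R : F) != 0.

Definition relations (V : algType F) (A B C : V) : Prop :=
  comm A B = C /\
  exists2 Q, GRing.comm A Q & comm A C = Q + delta *: B + beta *: acomm A B.

Lemma symm_step (V : algType F) (A B C : V) p q : relations A B C ->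
  symm A C p.+1 q.+1 = symm A C p.+2 q - delta *: skew A B p.+1 q
                       - beta *: (skew A B p.+2 q + skew A B p.+1 q.+1).
Proof.
move=> [_ [Q cAQ hAC]].
rewrite symm_shift hAC !skewD !skewZ skew_central // skew_acomm add0r.
by rewrite opprD addrA.
Qed.

Definition Fam := forall V : algType F, V -> V -> V -> V.

Definition rep (N : nat) (X : Fam) : Prop := exists c : nat -> F,
  forall (V : algType F) (A B C : V), relations A B C ->
    X V A B C = \sum_(k < N) c k *: acomm (A ^+ k) C.

Lemma rep_ext N (X Y : Fam) :
  (forall (V : algType F) (A B C : V), relations A B C -> X V A B C = Y V A B C) ->
  rep N X -> rep N Y.
Proof. by move=> eXY [c hc]; exists c => V A B C h; rewrite -eXY // hc. Qed.

Lemma rep_0 N : rep N (fun V A B C => 0).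
Proof. by exists (fun _ => 0) => V A B C _; rewrite big1 // => k _; rewrite scale0r. Qed.

Lemma rep_add N (X Y : Fam) : rep N X -> rep N Y ->
  rep N (fun V A B C => X V A B C + Y V A B C).
Proof.
move=> [c hc] [d hd]; exists (fun k => c k + d k) => V A B C h.
by rewrite hc // hd // -big_split; apply: eq_bigr => k _; rewrite scalerDl.
Qed.

Lemma rep_scale N k (X : Fam) : rep N X -> rep N (fun V A B C => k *: X V A B C).
Proof.
move=> [c hc]; exists (fun i => k * c i) => V A B C h.
by rewrite hc // scaler_sumr; apply: eq_bigr => i _; rewrite scalerA.
Qed.

Lemma rep_mono N M (X : Fam) : (N <= M)%N -> rep N X -> rep M X.
Proof.
move=> leNM [c hc]; exists (fun k => if (k < N)%N then c k else 0) => V A B C h.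
rewrite hc // (big_ord_widen M (fun k => c k *: acomm (A ^+ k) C)) // big_mkcond.
by apply: eq_bigr => k _; case: ifP => //; rewrite scale0r.
Qed.

Lemma rep_sum N n (X : nat -> Fam) : (forall t, (t < n)%N -> rep N (X t)) ->
  rep N (fun V A B C => \sum_(0 <= t < n) X t V A B C).
Proof.
elim: n => [|n IH] hX.
  by apply: rep_ext (rep_0 N) => V A B C _; rewrite big_geq.
apply: rep_ext (rep_add (IH (fun t lt_tn => hX t (ltnW lt_tn))) (hX n (ltnSn n))).
by move=> V A B C _; rewrite big_nat_recr.
Qed.

Lemma rep_acomm n N : (n < N)%N -> rep N (fun V A B C => acomm (A ^+ n) C).
Proof.
move=> ltnN; exists (fun k => (k == n)%:R) => V A B C _.
rewrite (bigD1 (Ordinal ltnN)) //= eqxx scale1r big1 ?addr0 // => k nek.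
suff /negbTE -> : nat_of_ord k != n by rewrite scale0r.
by apply: contra nek => /eqP ekn; apply/eqP/val_inj.
Qed.

Definition SkewFam a b : Fam := fun V A B C => skew A B a b.
Definition SymmFam p q : Fam := fun V A B C => symm A C p q.

Lemma symm_rep N : (forall a b, (a + b <= N)%N -> rep N (SkewFam a b)) ->
  forall p q, (p + q = N)%N -> rep N.+1 (SymmFam p q).
Proof.
move=> hskew p q; have hskew' a b : (a + b <= N)%N -> rep N.+1 (SkewFam a b).
  by move=> leN; apply: rep_mono (hskew a b leN).
elim: q p => [|q IHq] p.
  rewrite addn0 => <-; apply: rep_ext (rep_acomm (ltnSn p)).
  by move=> V A B C _; rewrite /SymmFam symm_0.
case: p => [|p] hpq.
  apply: rep_ext (@rep_acomm q.+1 N.+1 ltac:(lia)).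
  by move=> V A B C _; rewrite /SymmFam symmC symm_0.
have r1 := IHq p.+2 ltac:(lia).
have r2 := rep_scale (- delta) (hskew' p.+1 q ltac:(lia)).
have r3 := rep_scale (- beta)
  (rep_add (hskew' p.+2 q ltac:(lia)) (hskew' p.+1 q.+1 ltac:(lia))).
apply: rep_ext (rep_add (rep_add r1 r2) r3) => V A B C hrel.
by rewrite /SymmFam /SkewFam (symm_step p q hrel) !scaleNr.
Qed.

Lemma skew_rep N : (forall p q, (p + q = N)%N -> rep N.+1 (SymmFam p q)) ->
  forall a b, (b < a)%N -> (a + b = N.+1)%N -> rep N.+1 (SkewFam a b).
Proof.
move=> hsymm a b ltba hab.
have [n ea] : exists n, a = (b + n.+1)%N by exists (a - b).-1; lia.
subst a.
have hsum := rep_sum (fun t (ltn : (t < n.+1)%N) =>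
  hsymm (b + t)%N (b + (n - t))%N ltac:(lia)).
apply: rep_ext (rep_scale 2%:R^-1 hsum) => V A B C [hC _].
by rewrite /SkewFam /SymmFam -hC -skew_sum2 -scaler_nat scalerA mulVf ?scale1r.
Qed.

Lemma skew_rep_all N a b : (a + b <= N)%N -> rep N (SkewFam a b).
Proof.
elim: N a b => [|N IH] a b.
  rewrite leqn0 addn_eq0 => /andP [/eqP -> /eqP ->].
  by apply: rep_ext (rep_0 0) => V A B C _; rewrite /SkewFam skew_id.
have hskew := skew_rep (symm_rep IH).
rewrite leq_eqVlt ltnS => /orP [/eqP hab | leN]; last exact: rep_mono (IH a b leN).
case: (ltngtP b a) => [ltba | ltab | <-]; first exact: hskew.
  apply: rep_ext (rep_scale (-1) (hskew b a ltab ltac:(lia))) => V A B C _.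
  by rewrite /SkewFam scaleN1r skewN opprK.
by apply: rep_ext (rep_0 _) => V A B C _; rewrite /SkewFam skew_id.
Qed.

End UniversalCoefficients.

Lemma poly_relations (F : fieldType) (beta delta : F) (V : algType F) (A B C : V)
    (L : nat) (alpha : nat -> F) (eps : F) :
  comm A B = C ->
  comm A C = \sum_(1 <= m < L.+2) alpha m *: A ^+ m + delta *: B
             + eps%:A + beta *: acomm A B ->
  relations beta delta A B C.
Proof.
move=> hC hAC; split => //.
have cZ (y : V) (k : F) : GRing.comm A y -> GRing.comm A (k *: y).
  by rewrite /GRing.comm -scalerAr -scalerAl => ->.
exists (\sum_(1 <= m < L.+2) alpha m *: A ^+ m + eps%:A).
  apply: commrD; last exact: cZ _ _ (commr1 A).
  by apply: commr_sum => m _; apply/cZ/commrX/commr_refl.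
by rewrite hAC; congr (_ + _); rewrite addrAC.
Qed.


Theorem corollary3 (F : numClosedFieldType) (beta delta : F) (i j : nat) :
  (1 <= i)%N -> (1 <= j)%N ->
  exists W : nat -> F,
    (i = j -> forall k, (k < i + j)%N -> W k = 0) /\
    forall (V : algType F) (A B C : V) (L : nat) (alpha : nat -> F) (eps : F),
      comm A B = C ->
      comm A C = \sum_(1 <= m < L.+2) alpha m *: A ^+ m + delta *: B
                 + eps%:A + beta *: acomm A B ->
      A ^+ i * B * A ^+ j - A ^+ j * B * A ^+ i
        = \sum_(k < i + j) W k *: acomm (A ^+ k) C.
Proof.
move=> _ _; case: (eqVneq i j) => [<- | neij].
  exists (fun _ => 0); split => // V A B C L alpha eps _ _.
  by rewrite subrr big1 // => k _; rewrite scale0r.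
have two_neq0 : (2%:R : F) != 0 by rewrite pnatr_eq0.
have [W hW] := skew_rep_all beta delta two_neq0 (leqnn (i + j)).
exists W; split => [eij | V A B C L alpha eps hC hAC]; first by rewrite eij eqxx in neij.
exact: hW V A B C (poly_relations hC hAC).
Qed.
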